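(* Let $\mathbb{E}$ be a finite-dimensional real inner-product space and $\mathcal{C}\subseteq\mathbb{E}$ a compact convex set. Then the nonempty exposed faces of $\mathcal{C}^\circ$ other than $\mathcal{C}^\circ$ itself are precisely the nonempty sets of the form \[ F_{\bar x}:=\{y\in N_{\mathcal{C}}(\bar x) : \langle y,\bar x\rangle=1\} \] as $\bar x$ ranges over $\mathcal{C}$. Moreover, for any such face, $\operatorname{relint}(F_{\bar x})=\{y\in\operatorname{relint}(N_{\mathcal{C}}(\bar x)) : \langle y,\bar x\rangle=1\}$.
   Context: $\mathcal{C}^\circ:=\{y\in\mathbb{E}^*:\langle y,x\rangle\le1\ \forall x\in\mathcal{C}\}$ is the polar. $N_{\mathcal{C}}(\bar x):=\{y\in\mathbb{E}^*:\langle y,x\rangle\le\langle y,\bar x\rangle\ \forall x\in\mathcal{C}\}$ is the normal cone. An exposed face of a convex set $D$ is a set of the form $D\cap H$ for a supporting hyperplane $H$ of $D$. $\operatorname{relint}$ denotes relative interior. *)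

From HB Require Import structures.
From mathcomp Require Import all_boot all_order all_algebra.
From mathcomp Require Import all_classical all_reals all_analysis.
Set Implicit Arguments. Unset Strict Implicit. Unset Printing Implicit Defensive.
Import Order.TTheory GRing.Theory Num.Theory numFieldTopology.Exports numFieldNormedType.Exports.
Local Open Scope classical_set_scope.
Local Open Scope ring_scope.

(* The finite-dimensional real inner-product space E is modelled as
   'rV[R]_n with the standard inner product; E^* is identified with E
   via the inner product (Riesz). *)
Definition ip {R : realType} {n : nat} (u v : 'rV[R]_n) : R :=
  \sum_(i < n) u 0 i * v 0 i.

Definition polar {R : realType} {n : nat} (C : set 'rV[R]_n) : set 'rV[R]_n :=
  [set y | forall x, C x -> ip y x <= 1].

Definition normal_cone {R : realType} {n : nat} (C : set 'rV[R]_n)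
  (xbar : 'rV[R]_n) : set 'rV[R]_n :=
  [set y | forall x, C x -> ip y x <= ip y xbar].

Definition supporting_hyperplane {R : realType} {n : nat} (D : set 'rV[R]_n)
  (H : set 'rV[R]_n) : Prop :=
  exists (a : 'rV[R]_n) (b : R), a != 0 /\
    H = [set y | ip a y = b] /\
    (forall y, D y -> ip a y <= b) /\
    (exists y, D y /\ ip a y = b).

Definition exposed_face {R : realType} {n : nat} (D F : set 'rV[R]_n) : Prop :=
  exists H, supporting_hyperplane D H /\ F = D `&` H.

Definition affine_hull {R : realType} {n : nat} (S : set 'rV[R]_n) : set 'rV[R]_n :=
  [set x | exists (k : nat) (p : 'I_k -> 'rV[R]_n) (w : 'I_k -> R),
     (forall i, S (p i)) /\ \sum_(i < k) w i = 1 /\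
     x = \sum_(i < k) w i *: p i].

Definition relint {R : realType} {n : nat} (S : set 'rV[R]_n) : set 'rV[R]_n :=
  [set x | S x /\ exists eps : R, 0 < eps /\
     forall y, affine_hull S y -> ip (y - x) (y - x) < eps ^+ 2 -> S y].

Definition Fx {R : realType} {n : nat} (C : set 'rV[R]_n) (xbar : 'rV[R]_n)
  : set 'rV[R]_n :=
  [set y | normal_cone C xbar y /\ ip y xbar = 1].

(* Part one: a supporting hyperplane [<a,.> = b] of the polar has [b > 0],
   because the polar of a bounded set absorbs every direction.  Then
   [z := a / b] satisfies [<z,y> <= 1] on the polar with equality attained;
   if [z] were outside [C], separating it from its nearest point in [C]
   would tilt the attaining [y] into a point of the polar with [<z,y> > 1].
   So [z] is in [C] and the face is [F_z].  Conversely [F_xbar] is cut out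
   by [<xbar,.> = 1] and misses [0], which lies in the polar.

   Part two: [F_xbar] is the slice of the cone [N_C(xbar)] by the affine
   hyperplane [<.,xbar> = 1], and the radial projection [z |-> z / <z,xbar>]
   is continuous near that slice and maps the affine hull of the cone into
   the affine hull of the slice, so relative interiors correspond. *)

From Pilot Require Import Defs.
From HB Require Import structures.
From mathcomp Require Import all_boot all_order all_algebra.
From mathcomp Require Import all_classical all_reals all_analysis.
From mathcomp Require Import ring lra.

Set Implicit Arguments.
Unset Strict Implicit.
Unset Printing Implicit Defensive.
Import Order.TTheory GRing.Theory Num.Theory numFieldTopology.Exports numFieldNormedType.Exports.
Local Open Scope classical_set_scope.
Local Open Scope ring_scope.

Section InnerProduct.
Variables (R : realType) (n : nat).
Implicit Types (u v w : 'rV[R]_n).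
Local Notation ip := (@ip R n).

Lemma ipC u v : ip u v = ip v u.
Proof. by apply: eq_bigr => i _; rewrite mulrC. Qed.

Lemma ipDl u v w : ip (u + v) w = ip u w + ip v w.
Proof. by rewrite /Defs.ip -big_split; apply: eq_bigr => i _; rewrite mxE mulrDl. Qed.

Lemma ipZl (a : R) u w : ip (a *: u) w = a * ip u w.
Proof. by rewrite /Defs.ip mulr_sumr; apply: eq_bigr => i _; rewrite mxE mulrA. Qed.

Lemma ipNl u w : ip (- u) w = - ip u w.
Proof. by rewrite -scaleN1r ipZl mulN1r. Qed.

Lemma ipBl u v w : ip (u - v) w = ip u w - ip v w.
Proof. by rewrite ipDl ipNl. Qed.

Lemma ip0l w : ip 0 w = 0.
Proof. by rewrite -(scale0r 0) ipZl mul0r. Qed.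

Lemma ipDr u v w : ip w (u + v) = ip w u + ip w v.
Proof. by rewrite ipC ipDl ipC (ipC v). Qed.

Lemma ipZr (a : R) u w : ip w (a *: u) = a * ip w u.
Proof. by rewrite ipC ipZl ipC. Qed.

Lemma ipBr u v w : ip w (u - v) = ip w u - ip w v.
Proof. by rewrite ipC ipBl !(ipC w). Qed.

Lemma ip0r w : ip w 0 = 0.
Proof. by rewrite ipC ip0l. Qed.

Lemma ip_suml k (F : 'I_k -> 'rV[R]_n) w :
  ip (\sum_(i < k) F i) w = \sum_(i < k) ip (F i) w.
Proof.
elim: k F => [|k IH] F; first by rewrite !big_ord0 ip0l.
by rewrite !big_ord_recr /= ipDl IH.
Qed.

Lemma ipZZ (a : R) u : ip (a *: u) (a *: u) = a ^+ 2 * ip u u.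
Proof. by rewrite ipZl ipZr mulrA expr2. Qed.

Lemma ip_self_ge0 u : 0 <= ip u u.
Proof. by apply: sumr_ge0 => i _; rewrite -expr2 sqr_ge0. Qed.

Lemma ip_self_eq0 u : (ip u u == 0) = (u == 0).
Proof.
apply/idP/eqP => [|->]; last by rewrite ip0l.
rewrite psumr_eq0 => [/allP u0|i _]; last by rewrite -expr2 sqr_ge0.
apply/rowP => i; rewrite mxE.
by have /= := u0 i (mem_index_enum i); rewrite -expr2 sqrf_eq0 => /eqP.
Qed.

Lemma ip_self_gt0 u : u != 0 -> 0 < ip u u.
Proof. by move=> u0; rewrite lt_neqAle ip_self_ge0 andbT eq_sym ip_self_eq0. Qed.

Lemma ip_selfD_le u v : ip (u + v) (u + v) <= 2 * ip u u + 2 * ip v v.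
Proof.
have := ip_self_ge0 (u - v).
rewrite !ipBl !ipBr !ipDl !ipDr (ipC v u); lra.
Qed.

Lemma ip_cauchy_schwarz u v : ip u v ^+ 2 <= ip u u * ip v v.
Proof.
have [v0|v0] := eqVneq v 0; first by rewrite v0 !ip0r expr0n mulr0.
have Qv := ip_self_gt0 v0.
have := ip_self_ge0 (ip v v *: u - ip u v *: v).
rewrite !ipBl !ipBr !ipZl !ipZr (ipC v u) => H.
have : 0 <= ip v v * (ip u u * ip v v - ip u v ^+ 2) by nra.
by rewrite pmulr_rge0 // subr_ge0.
Qed.

End InnerProduct.

Lemma continuous_bigsum (T : topologicalType) (R : realType) k
    (F : 'I_k -> T -> R) :
  (forall i, continuous (F i)) -> continuous (fun x => \sum_(i < k) F i x).
Proof.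
elim: k F => [|k IH] F cF.
  under [fun x => _]funext do rewrite big_ord0; exact: cst_continuous.
under [fun x => _]funext do rewrite big_ord_recr /=.
by move=> x; apply: continuousD; [exact: IH | exact: cF].
Qed.

Lemma continuous_ip (R : realType) n (w : 'rV[R]_n) : continuous (ip w).
Proof.
apply: continuous_bigsum => i x; apply: continuousM; first exact: cst_continuous.
exact: coord_continuous.
Qed.

Lemma continuous_ip_self (R : realType) n :
  continuous (fun u : 'rV[R]_n => ip u u).
Proof. by apply: continuous_bigsum => i x; apply: continuousM; exact: coord_continuous. Qed.

Section AffineHull.
Variables (R : realType) (n : nat).
Implicit Types (S T : set 'rV[R]_n).

Lemma sub_affine_hull S : S `<=` affine_hull S.
Proof.
move=> x Sx; exists 1%N, (fun _ => x), (fun _ => 1); split => //.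
by rewrite !big_ord1 scale1r.
Qed.

Lemma affine_hullS S T : S `<=` T -> affine_hull S `<=` affine_hull T.
Proof. by move=> ST x [k [p [w [Sp [w1 ->]]]]]; exists k, p, w; split => // i; apply: ST. Qed.

Lemma affine_hull_comb2 S u v (l : R) : affine_hull S u -> affine_hull S v ->
  affine_hull S (l *: u + (1 - l) *: v).
Proof.
move=> [k1 [p1 [w1 [S1 [s1 ->]]]]] [k2 [p2 [w2 [S2 [s2 ->]]]]].
pose join (A : Type) (f1 : 'I_k1 -> A) (f2 : 'I_k2 -> A) i :=
  match fintype.split i with inl j => f1 j | inr j => f2 j end.
exists (k1 + k2)%N, (join _ p1 p2), (join _ (fun j => l * w1 j) (fun j => (1 - l) * w2 j)).
split; first by move=> i; rewrite /join; case: (fintype.split i).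
have joinl A f1 f2 j : join A f1 f2 (lshift k2 j) = f1 j.
  by rewrite /join -[lshift k2 j]/(unsplit (inl j)) unsplitK.
have joinr A f1 f2 j : join A f1 f2 (rshift k1 j) = f2 j.
  by rewrite /join -[rshift k1 j]/(unsplit (inr j)) unsplitK.
rewrite !big_split_ord /=.
under eq_bigr do rewrite joinl. under [X in _ + X = _]eq_bigr do rewrite joinr.
under [X in _ = X + _]eq_bigr do rewrite !joinl.
under [X in _ = _ + X]eq_bigr do rewrite !joinr.
rewrite -!mulr_sumr s1 s2 !mulr1 subrKC; split => //.
by rewrite !scaler_sumr; congr (_ + _); apply: eq_bigr => i _; rewrite scalerA.
Qed.

Lemma affine_hull_ip_eq S c : (forall x, S x -> ip x c = 1) ->
  forall y, affine_hull S y -> ip y c = 1.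
Proof.
move=> S1 y [k [p [w [Sp [w1 ->]]]]].
by rewrite ip_suml -w1; apply: eq_bigr => i _; rewrite ipZl S1 // mulr1.
Qed.

End AffineHull.

Section NormalCone.
Variables (R : realType) (n : nat) (C : set 'rV[R]_n) (xbar : 'rV[R]_n).
Local Notation N := (normal_cone C xbar).
Local Notation F := (Fx C xbar).

Lemma normal_coneD y1 y2 : N y1 -> N y2 -> N (y1 + y2).
Proof. by move=> N1 N2 x Cx; rewrite !ipDl lerD // ?N1 ?N2. Qed.

Lemma normal_coneZ (c : R) y : 0 <= c -> N y -> N (c *: y).
Proof. by move=> c0 Ny x Cx; rewrite !ipZl ler_wpM2l // Ny. Qed.

Lemma Fx_sub_polar : F `<=` polar C.
Proof. by move=> y [Ny y1] x Cx; rewrite -y1; exact: Ny. Qed.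

Lemma polar_cap_hyperplane : polar C `&` [set y | ip xbar y = 1] = F.
Proof.
apply/seteqP; split => y; last by move=> Fy; split; [exact: Fx_sub_polar | rewrite /= ipC; case: Fy].
by move=> [Py]; rewrite /= ipC => y1; split => // x Cx; rewrite y1; exact: Py.
Qed.

Lemma Fx_shift y1 p t : F y1 -> N p -> 0 <= t -> 0 < t + ip p xbar ->
  F ((t + ip p xbar)^-1 *: (p + t *: y1)).
Proof.
move=> [Ny1 y1x] Np t0 tp; split.
  apply: normal_coneZ; first by rewrite invr_ge0 ltW.
  exact: (normal_coneD Np (normal_coneZ t0 Ny1)).
by rewrite ipZl ipDl ipZl y1x mulr1 [ip p xbar + t]addrC mulVf // gt_eqF.
Qed.

Lemma affine_hull_normal_cone_normalize y1 z0 : F y1 -> affine_hull N z0 ->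
  0 < ip z0 xbar -> affine_hull F ((ip z0 xbar)^-1 *: z0).
Proof.
move=> Fy1 [k [p [w [Np [w1 ->]]]]].
set z := \sum_(i < k) w i *: p i; set g := ip z xbar => g0.
pose f i := ip (p i) xbar.
have gE : g = \sum_(i < k) w i * f i.
  by rewrite /g /z ip_suml; apply: eq_bigr => i _; rewrite ipZl.
(* Shifting every [p i] by [t *: y1] for [t] large makes it rescalable into [F];
   [z / g] is then an affine combination of [y1] and a point of [aff F]. *)
pose t := 1 + \sum_(i < k) `|f i|.
have tf i : 0 < t + f i.
  rewrite /t (bigD1 i) //=.
  have : 0 <= \sum_(j < k | j != i) `|f j| by rewrite sumr_ge0.
  have : - f i <= `|f i| by rewrite -normrN ler_norm.
  lra.
have t0 : 0 <= t by rewrite /t addr_ge0 // sumr_ge0.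
have gt0 : 0 < g + t by lra.
pose A := (g + t)^-1 *: (z + t *: y1).
have affA : affine_hull F A.
  exists k, (fun i => (t + f i)^-1 *: (p i + t *: y1)),
    (fun i => w i * (t + f i) / (g + t)); split.
    by move=> i; exact: (Fx_shift Fy1 (Np i) t0 (tf i)).
  split.
    rewrite -mulr_suml; under eq_bigr do rewrite mulrDr.
    by rewrite big_split /= -mulr_suml w1 mul1r -gE addrC mulfV ?gt_eqF.
  rewrite /A /z; symmetry.
  transitivity (\sum_(i < k) ((g + t)^-1 * w i) *: (p i + t *: y1)).
    apply: eq_bigr => i _; rewrite scalerA; congr (_ *: _).
    by field; rewrite !gt_eqF ?tf.
  under eq_bigr do rewrite -scalerA scalerDr.
  by rewrite -scaler_sumr big_split /= -scaler_suml w1 scale1r.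
have -> : g^-1 *: z = ((g + t) / g) *: A + (1 - (g + t) / g) *: y1.
  rewrite /A scalerA mulrAC mulfV ?gt_eqF // div1r scalerDr scalerA -addrA -scalerDl.
  suff -> : g^-1 * t + (1 - (g + t) / g) = 0 by rewrite scale0r addr0.
  by field; rewrite gt_eqF.
by apply: affine_hull_comb2 => //; exact: sub_affine_hull.
Qed.

End NormalCone.

Lemma radial_projection_near (R : realType) n (xbar y : 'rV[R]_n) (eps : R) :
  ip y xbar = 1 -> 0 < eps ->
  exists2 delta, 0 < delta & forall z, ip (z - y) (z - y) < delta ^+ 2 ->
    0 < ip z xbar /\ ip ((ip z xbar)^-1 *: z - y) ((ip z xbar)^-1 *: z - y) < eps ^+ 2.
Proof.
move=> y1 e0; set X := ip xbar xbar; set Y := ip y y.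
have X0 : 0 <= X by apply: ip_self_ge0.
have Y0 : 0 <= Y by apply: ip_self_ge0.
(* [K] forces [|<d,xbar>| <= 1/2], hence [<z,xbar> >= 1/2], and
   [|d - <d,xbar> y|^2 <= 2 |d|^2 (1 + X Y)], where [d := z - y]. *)
set K := Num.min (1 / (4 * (X + 1))) (eps ^+ 2 / (8 * (1 + X * Y))).
have K0 : 0 < K by rewrite lt_min !divr_gt0 //; nra.
exists (Num.min 1 K); first by rewrite lt_min ltr01 K0.
move=> z; set d := z - y => Qd.
have {Qd} QdK : ip d d < K.
  apply: (lt_le_trans Qd); rewrite expr2.
  have h1 : Num.min 1 K <= 1 by rewrite ge_min lexx.
  have h2 : Num.min 1 K <= K by rewrite ge_min lexx orbT.
  have h3 : 0 < Num.min 1 K by rewrite lt_min ltr01 K0.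
  nra.
have Qd0 : 0 <= ip d d by apply: ip_self_ge0.
have [Qd1 Qd2] : ip d d * (4 * (X + 1)) < 1 /\ ip d d * (8 * (1 + X * Y)) < eps ^+ 2.
  by move: QdK; rewrite lt_min -!ltr_pdivlMr ?mul1r; [case/andP | nra | nra].
set h := ip d xbar.
have hX : h ^+ 2 <= ip d d * X by apply: ip_cauchy_schwarz.
have zE : z = d + y by rewrite /d subrK.
have gE : ip z xbar = 1 + h by rewrite zE ipDl y1 addrC.
have g12 : 1 / 2 <= ip z xbar by rewrite gE; nra.
split; first by lra.
set ginv := (ip z xbar)^-1.
have ginvg : ginv * ip z xbar = 1 by rewrite mulVf // gt_eqF //; lra.
have ginv0 : 0 < ginv by rewrite invr_gt0; lra.
have ginv2 : ginv ^+ 2 <= 4 by rewrite expr2; nra.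
have -> : ginv *: z - y = ginv *: (d - h *: y).
  rewrite zE -{2}[y]scale1r -ginvg -scalerA -scalerBr; congr (_ *: _).
  by rewrite gE scalerDl scale1r opprD addrA addrK.
rewrite ipZZ.
have := ip_selfD_le d (- h *: y); rewrite ipZZ sqrrN -/Y scaleNr => Qsum.
have Q0 := ip_self_ge0 (d - h *: y).
set Q := ip (d - h *: y) (d - h *: y) in Qsum Q0 *.
have Q4 : ginv ^+ 2 * Q <= 4 * Q by rewrite ler_wpM2r.
have hY : h ^+ 2 * Y <= ip d d * X * Y by rewrite ler_wpM2r.
nra.
Qed.

Lemma relint_Fx (R : realType) n (C : set 'rV[R]_n) xbar :
  relint (Fx C xbar) = [set y | relint (normal_cone C xbar) y /\ ip y xbar = 1].
Proof.
apply/seteqP; split => y /=.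
- move=> [[Ny y1] [eps [e0 He]]]; split => //; split => //.
  have [delta d0 Hd] := radial_projection_near y1 e0.
  exists delta; split => // z Az /Hd [z0 Qz].
  have Fz := He _ (affine_hull_normal_cone_normalize (conj Ny y1) Az z0) Qz.
  rewrite -[z](scalerKV (lt0r_neq0 z0)).
  exact: (normal_coneZ (ltW z0) Fz.1).
- move=> [[Ny [eps [e0 He]]] y1]; split => //; exists eps; split => // w Aw Qw.
  split; first by apply: He Qw; apply: affine_hullS Aw => x [].
  by apply: affine_hull_ip_eq Aw => x [].
Qed.

Lemma convex_set_comb2 (R : realType) n (C : set 'rV[R]_n) x y (s : R) :
  convex_set C -> C x -> C y -> 0 <= s -> s <= 1 -> C (s *: x + (1 - s) *: y).
Proof.
move=> Ccvx Cx Cy s0 s1.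
have s01 : Itv.spec (@Itv.num_sem R) (Itv.Real `[0%Z, 1%Z]) s.
  by rewrite /Itv.spec /Itv.num_sem /= num_real in_itv /= s0 s1.
by have := Ccvx x y (Itv.Def s01) (mem_set Cx) (mem_set Cy); rewrite inE.
Qed.

Section Polar.
Variables (R : realType) (n : nat) (C : set 'rV[R]_n).
Hypothesis Ccpt : compact C.
Hypothesis Ccvx : convex_set C.

Lemma polar_absorbing a : exists2 eps : R, 0 < eps & polar C (eps *: a).
Proof.
have [[c Cc]|C0] := pselect (C !=set0); last first.
  by exists 1 => // x Cx; case: C0; exists x.
have [m _ Hm] : exists2 m, m \in C & forall x, x \in C -> ip a x <= ip a m.
  apply: EVT_max_rV => //; first by exists c.
  exact/continuous_subspaceT/continuous_ip.
set M := ip a m in Hm.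
have M1 : 0 < 1 + `|M| by rewrite ltr_pwDl.
exists (1 + `|M|)^-1; first by rewrite invr_gt0.
move=> x Cx; rewrite ipZl ler_pdivrMl // mulr1.
by apply: le_trans (Hm x (mem_set Cx)) _; rewrite ler_wpDl // ler_norm.
Qed.

Lemma polar_halfspace_gt0 a b : a != 0 ->
  (forall y, polar C y -> ip a y <= b) -> 0 < b.
Proof.
move=> a0 Pab; have [eps e0 Pa] := polar_absorbing a.
by apply: lt_le_trans (Pab _ Pa); rewrite ipZr mulr_gt0 ?ip_self_gt0.
Qed.

Lemma nearest_point_exists z : C !=set0 ->
  exists2 p, C p & forall c, C c -> ip (z - p) (z - p) <= ip (z - c) (z - c).
Proof.
move=> C0; have [p Cp Hp] : exists2 p, p \in C &
    forall c, c \in C -> ip (z - p) (z - p) <= ip (z - c) (z - c).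
  have zB : continuous (fun x : 'rV[R]_n => z - x).
    by move=> x; apply: continuousB; [exact: cst_continuous | exact: cvg_id].
  apply: EVT_min_rV => //; apply/continuous_subspaceT => x.
  exact: (continuous_comp (zB x) (@continuous_ip_self R n _)).
by exists p; [rewrite -inE | move=> c Cc; apply: Hp; rewrite inE].
Qed.

(* Otherwise moving from [p] slightly towards [c] would get closer to [z]. *)
Lemma nearest_point_obtuse z p : C p ->
  (forall c, C c -> ip (z - p) (z - p) <= ip (z - c) (z - c)) ->
  forall c, C c -> ip (z - p) (c - p) <= 0.
Proof.
move=> Cp Hp c Cc; rewrite leNgt; apply/negP => m0.
set d := z - p in Hp m0 *; set e := c - p in m0 *.
set m := ip d e in m0.
have Qe := ip_self_ge0 e.
set s := m / (ip e e + m).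
have sE : s * (ip e e + m) = m by rewrite /s mulfVK // gt_eqF //; lra.
have s0 : 0 < s by rewrite divr_gt0 //; lra.
have s1 : s <= 1 by rewrite ler_pdivrMr; lra.
have := Hp _ (convex_set_comb2 Ccvx Cc Cp (ltW s0) s1).
have -> : z - (s *: c + (1 - s) *: p) = d - s *: e.
  by apply/rowP => i; rewrite !mxE; ring.
clearbody d e; rewrite ipBl !ipBr !ipZl !ipZr (ipC e d) -/m; nra.
Qed.

Lemma compact_convex_separation z : ~ C z ->
  exists d b, (forall c, C c -> ip d c <= b) /\ b < ip d z.
Proof.
move=> Cz; have [C0|C0] := pselect (C !=set0); last first.
  exists 0, (-1); rewrite ip0l ltrN10; split => // c Cc.
  by case: C0; exists c.
have [p Cp Hp] := nearest_point_exists z C0.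
exists (z - p), (ip (z - p) p); split.
  move=> c' Cc'; rewrite -subr_le0 -ipBr.
  exact: nearest_point_obtuse Cp Hp c' Cc'.
rewrite -subr_gt0 -ipBr ip_self_gt0 // subr_eq0.
by apply/eqP => zp; apply: Cz; rewrite zp.
Qed.

Lemma polar_attained_mem z y0 : (forall y, polar C y -> ip z y <= 1) ->
  polar C y0 -> ip z y0 = 1 -> C z.
Proof.
move=> Pz Py0 zy0; apply: contrapT => /compact_convex_separation [d [b [Cb bz]]].
set s := (1 + `|b|)^-1.
have b1 : 0 < 1 + `|b| by rewrite ltr_pwDl.
have s0 : 0 < s by rewrite invr_gt0.
have sb : s * (1 + `|b|) = 1 by rewrite mulVf ?gt_eqF.
have k0 : 0 < 1 + s * b by have := ler_norm (- b); rewrite normrN; nra.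
have Py : polar C ((1 + s * b)^-1 *: (y0 + s *: d)).
  move=> x Cx; rewrite ipZl ipDl ipZl ler_pdivrMl // mulr1.
  by have := Py0 x Cx; have := Cb x Cx; nra.
have := Pz _ Py; rewrite ipZr ipDr ipZr zy0 (ipC z d) ler_pdivrMl // mulr1.
nra.
Qed.

Lemma exposed_face_polarP F : exposed_face (polar C) F ->
  exists2 xbar, C xbar & F = Fx C xbar.
Proof.
move=> [_ [[a [b [a0 [-> [Pab [y0 [Py0 ay0]]]]]]] ->]].
have b0 := polar_halfspace_gt0 a0 Pab.
have abE y : (ip a y = b) = (ip (b^-1 *: a) y = 1).
  rewrite ipZl; apply/propext; split => [->|]; first by rewrite mulVf ?lt0r_neq0.
  by move/(congr1 ( *%R b)); rewrite mulr1 mulVKf ?lt0r_neq0.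
exists (b^-1 *: a); last by rewrite -polar_cap_hyperplane; under eq_fun do rewrite abE.
apply: (polar_attained_mem _ Py0); last by rewrite -abE.
by move=> y Py; rewrite ipZl ler_pdivrMl // mulr1 Pab.
Qed.

End Polar.

Lemma Fx_exposed_face (R : realType) n (C : set 'rV[R]_n) xbar :
  C xbar -> Fx C xbar !=set0 -> exposed_face (polar C) (Fx C xbar).
Proof.
move=> Cx [y [Ny yx]]; exists [set y | ip xbar y = 1].
split; last by rewrite polar_cap_hyperplane.
exists xbar, 1; split.
  by apply/eqP => x0; move: yx; rewrite x0 ip0r => /eqP; rewrite eq_sym oner_eq0.
split=> //; split; first by move=> y' Py'; rewrite ipC; exact: Py'.
by exists y; split; [exact: (Fx_sub_polar (conj Ny yx)) | rewrite ipC].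
Qed.

Lemma Fx_neq_polar (R : realType) n (C : set 'rV[R]_n) xbar : Fx C xbar <> polar C.
Proof.
move=> FP; have : polar C 0 by move=> x _; rewrite ip0l ler01.
by rewrite -FP => -[_]; rewrite ip0l => /eqP; rewrite eq_sym oner_eq0.
Qed.

Theorem theorem4p4 (R : realType) (n : nat) (C : set 'rV[R]_n)
  (Ccpt : @compact 'rV[R]_n C) (Ccvx : @convex_set R 'rV[R]_n C) :
  (forall F : set 'rV[R]_n,
     (exposed_face (polar C) F /\ F !=set0 /\ F <> polar C) <->
     (F !=set0 /\ exists xbar, C xbar /\ F = Fx C xbar)) /\
  (forall xbar, C xbar -> Fx C xbar !=set0 ->
     relint (Fx C xbar) =
     [set y | relint (normal_cone C xbar) y /\ ip y xbar = 1]).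
Proof.
split=> [F|xbar _ _]; last exact: relint_Fx.
split=> [[/(exposed_face_polarP Ccpt Ccvx) [xbar Cx ->] [F0 _]]|[F0 [xbar [Cx FE]]]].
  by split => //; exists xbar.
rewrite FE in F0 *; split; first exact: Fx_exposed_face.
by split => //; exact: Fx_neq_polar.
Qed.
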